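(* For every closed point $v$ of $\mathscr C$, $$\sum_{(e_0,\boldsymbol e,\boldsymbol f)\in\{0,1\}^7}\mu^0_S(e_0,\boldsymbol e,\boldsymbol f)\,\mathrm{fact}_v(e_0,\boldsymbol e,\boldsymbol f)=\sum_{(e_0,\boldsymbol e,\boldsymbol f)\in\{0,1\}^7}\mu^0_S(e_0,\boldsymbol e,\boldsymbol f)\,\mathrm{dens}_{S,v}(e_0,\boldsymbol e,\boldsymbol f).$$
   Context: $k$ is a finite field, $\mathscr C$ a smooth projective geometrically integral curve over $k$; for a closed point $v$, $\kappa_v$ is its residue field and $q_v=\#\kappa_v$. Elements of $\{0,1\}^7$ are written $(e_0,\boldsymbol e,\boldsymbol f)$, $\boldsymbol e=(e_1,e_2,e_3)$, $\boldsymbol f=(f_1,f_2,f_3)$; $i,j\in\{1,2,3\}$. Let $\{0,1\}^7_S$ be the set of $(e_0,\boldsymbol e,\boldsymbol f)$ with $\min\big((\sum_{j\neq i}e_j+\sum_jf_j)_i,(e_0+\sum_{j\neq i}(e_j+f_j))_i,e_0+\sum_ie_i\big)=0$. Let $\operatorname{Div}_{S,\mathrm{prim}}$ be the set of $(\mathcal E_0,\mathcal E_1,\mathcal E_2,\mathcal E_3,\mathcal F_1,\mathcal F_2,\mathcal F_3)\in\operatorname{Div}_{\mathrm{eff}}(\mathscr C)^7$ for which the gcd (minimum of multiplicities at each closed point) of $\sum_{j\neq i}\mathcal E_j+\sum_j\mathcal F_j$ ($i=1,2,3$), $\mathcal E_0+\sum_{j\neq i}(\mathcal E_j+\mathcal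 F_j)$ ($i=1,2,3$) and $\mathcal E_0+\sum_i\mathcal E_i$ is $0$; $\mu_S$ is the unique function on $\operatorname{Div}_{\mathrm{eff}}(\mathscr C)^7$ with $\mathbf 1_{\operatorname{Div}_{S,\mathrm{prim}}}(\boldsymbol{\mathcal D})=\sum_{0\leq\boldsymbol{\mathcal E}\leq\boldsymbol{\mathcal D}}\mu_S(\boldsymbol{\mathcal E})$; and for $\boldsymbol n\in\{0,1\}^7$, $\mu^0_S(\boldsymbol n)=\mu_S((n_\alpha v)_\alpha)$, which is independent of the closed point $v$ (equivalently, $\mu^0_S$ is the unique function on $\{0,1\}^7$ with $\mathbf 1_{\{0,1\}^7_S}(\boldsymbol n)=\sum_{\boldsymbol m\leq\boldsymbol n}\mu^0_S(\boldsymbol m)$). For $\boldsymbol\nu\in\mathbf N^3$, $F_{\boldsymbol\nu}(\rho,\boldsymbol T)=\sum_{\boldsymbol n\in\mathbf N^3}\rho^{\min_i(n_i+\nu_i)}\prod_iT_i^{n_i}$ and $\widetilde F_{\boldsymbol\nu}(\rho,\boldsymbol T)=(1-\rho T_1T_2T_3)\prod_i(1-T_i)F_{\boldsymbol\nu}(\rho,\boldsymbol T)$ (a polynomial in $\boldsymbol T$). Define $$\mathrm{fact}_v(e_0,\boldsymbol e,\boldsymbol f)=\frac{1}{1-q_v^{-2}}\,q_v^{-e_0-\sum_i(e_i+f_i)}\,\widetilde F_{(e_i+f_i)_i}\big(q_v,(q_v^{-1},q_v^{-1},q_v^{-1})\big).$$ For $\boldsymbol n=(e_0,\boldsymbol e,\boldsymbol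 f)\in\{0,1\}^7$ let $\kappa_v^{\boldsymbol n}$ be the set of $(x_0,x_1,x_2,x_3,y_1,y_2,y_3)\in\kappa_v^7$ whose coordinates vanish at the positions where $\boldsymbol n$ has entry $1$, and $$\mathrm{dens}_{S,v}(e_0,\boldsymbol e,\boldsymbol f)=q_v^{-6}\,\#\{(x_0,\boldsymbol x,\boldsymbol y)\in\kappa_v^{(e_0,\boldsymbol e,\boldsymbol f)}:\ x_1y_1+x_2y_2+x_3y_3=0\}.$$ *)

From HB Require Import structures.
From mathcomp Require Import all_boot all_order all_algebra all_field.
From mathcomp Require Import classical_sets boolp reals constructive_ereal ereal esum.

Set Implicit Arguments.
Unset Strict Implicit.
Unset Printing Implicit Defensive.

Import Order.TTheory GRing.Theory Num.Theory.
Local Open Scope ring_scope.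

(* {0,1}^7 : positions 0 = e_0, 1,2,3 = e_1,e_2,e_3, 4,5,6 = f_1,f_2,f_3. *)
Definition B7 := {ffun 'I_7 -> bool}.

Definition e0 (n : B7) : nat := n (inord 0).
Definition ee (n : B7) (i : 'I_3) : nat := n (inord i.+1).
Definition ff (n : B7) (i : 'I_3) : nat := n (inord i.+4).

Definition quantA (n : B7) (i : 'I_3) : nat :=
  (\sum_(j < 3 | j != i) ee n j + \sum_(j < 3) ff n j)%N.
Definition quantB (n : B7) (i : 'I_3) : nat :=
  (e0 n + \sum_(j < 3 | j != i) (ee n j + ff n j))%N.
Definition quantC (n : B7) : nat := (e0 n + \sum_(j < 3) ee n j)%N.

Definition minQuant (n : B7) : nat :=
  minn (\big[minn/quantC n]_(i < 3) quantA n i)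
       (\big[minn/quantC n]_(i < 3) quantB n i).

Definition inS (n : B7) : bool := minQuant n == 0%N.

Definition leB7 (m n : B7) : bool := [forall i, m i ==> n i].

Definition is_mu0S (mu : B7 -> int) : Prop :=
  forall n : B7, (inS n : int) = \sum_(m : B7 | leB7 m n) mu m.

Section Local.
Variable R : realType.

(* F_nu(rho, T) evaluated at rho = q, T = (1/q,1/q,1/q):
   sum over n in N^3 of q^(min_i (n_i+nu_i)) * q^(-(n_1+n_2+n_3)) *)
Definition F_at (q : R) (nu : nat * nat * nat) : R :=
  fine (\esum_(n in [set: nat * nat * nat])
         ((q ^+ minn (n.1.1 + nu.1.1)%N (minn (n.1.2 + nu.1.2)%N (n.2 + nu.2)%N))
          / q ^+ (n.1.1 + n.1.2 + n.2)%N)%:E).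

(* tilde F_nu(rho,T) = (1 - rho T1 T2 T3) prod_i (1 - T_i) F_nu(rho,T), at the same point *)
Definition Ftilde_at (q : R) (nu : nat * nat * nat) : R :=
  (1 - q * q^-1 * q^-1 * q^-1) * ((1 - q^-1) * (1 - q^-1) * (1 - q^-1)) * F_at q nu.

Definition fact_v (q : R) (n : B7) : R :=
  (1 - q^-2)^-1 * (q ^+ (e0 n + \sum_(i < 3) (ee n i + ff n i))%N)^-1 *
  Ftilde_at q ((ee n (inord 0) + ff n (inord 0))%N, (ee n (inord 1) + ff n (inord 1))%N,
   (ee n (inord 2) + ff n (inord 2))%N).

End Local.

(* dens_{S,v}, kappa_v = K a finite field *)
Definition dens_S (R : realType) (K : finFieldType) (n : B7) : R :=
  (#|K|%:R ^+ 6)^-1 *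
  #|[set x : {ffun 'I_7 -> K} |
      [forall i, n i ==> (x i == 0)] &&
      (x (inord 1) * x (inord 4) + x (inord 2) * x (inord 5)
        + x (inord 3) * x (inord 6) == 0)]|%:R.

(* The three ingredients are computed in closed form in terms of q = #|K|.
   The Moebius function mu^0_S is pinned down by its defining zeta relation,
   which is triangular for the order on {0,1}^7.  The local density counts
   points on the quadric x1 y1 + x2 y2 + x3 y3 = 0 pair by pair: the number of
   allowed pairs (x, y) with x y = c only depends on whether c = 0.  For F_nu,
   the layer-cake identity q^m = sum_(k <= m) (q^k - q^(k-1)) turns the sum
   over N^3 into a sum over k of geometric series over the orthant
   {n | n_i >= k - nu_i}.  Both sides then become the same rational function
   of q. *)
From HB Require Import structures.
From mathcomp Require Import all_boot all_order all_algebra all_field.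
From mathcomp Require Import classical_sets boolp reals constructive_ereal ereal esum.
From mathcomp Require Import sequences topology normedtype.
From mathcomp Require Import ring.

Set Implicit Arguments.
Unset Strict Implicit.
Unset Printing Implicit Defensive.

Import Order.TTheory GRing.Theory Num.Theory.
Import numFieldNormedType.Exports.
Local Open Scope ring_scope.

Definition ffun7 (T : Type) (t0 t1 t2 t3 t4 t5 t6 : T) : {ffun 'I_7 -> T} :=
  [ffun i : 'I_7 => nth t0 [:: t0; t1; t2; t3; t4; t5; t6] i].

Lemma ffun7E (T : Type) (t0 t1 t2 t3 t4 t5 t6 : T) (k : nat) : (k < 7)%N ->
  ffun7 t0 t1 t2 t3 t4 t5 t6 (inord k) = nth t0 [:: t0; t1; t2; t3; t4; t5; t6] k.
Proof. by move=> lt_k7; rewrite ffunE inordK. Qed.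

Lemma ord7_ind (P : 'I_7 -> Prop) :
  P (inord 0) -> P (inord 1) -> P (inord 2) -> P (inord 3) -> P (inord 4) -> P (inord 5) ->
  P (inord 6) -> forall i, P i.
Proof.
move=> P0 P1 P2 P3 P4 P5 P6 i; rewrite -[i]inord_val.
by case: i => [[|[|[|[|[|[|[|k]]]]]]] //= _].
Qed.

Lemma ffun7_bij (T : finType) :
  bijective (fun t : T * T * T * T * T * T * T =>
    ffun7 t.1.1.1.1.1.1 t.1.1.1.1.1.2 t.1.1.1.1.2 t.1.1.1.2 t.1.1.2 t.1.2 t.2).
Proof.
exists (fun f : {ffun 'I_7 -> T} =>
  (f (inord 0), f (inord 1), f (inord 2), f (inord 3), f (inord 4), f (inord 5), f (inord 6))).
  by case=> [[[[[[? ?] ?] ?] ?] ?] ?]; rewrite !ffun7E.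
by move=> f; apply/ffunP; apply: ord7_ind; rewrite ffun7E.
Qed.

Lemma sum_ffun7 (V : nmodType) (T : finType) (F : {ffun 'I_7 -> T} -> V) :
  \sum_(f : {ffun 'I_7 -> T}) F f =
  \sum_(t0 : T) \sum_(t1 : T) \sum_(t2 : T) \sum_(t3 : T) \sum_(t4 : T)
   \sum_(t5 : T) \sum_(t6 : T) F (ffun7 t0 t1 t2 t3 t4 t5 t6).
Proof.
rewrite !pair_big (reindex _ (onW_bij _ (ffun7_bij T))).
by apply: eq_big => // -[[[[[[? ?] ?] ?] ?] ?] ?].
Qed.

Lemma forall_ffun7 (T : Type) (P : 'I_7 -> T -> bool) t0 t1 t2 t3 t4 t5 t6 :
  [forall i, P i (ffun7 t0 t1 t2 t3 t4 t5 t6 i)] =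
  [&& P (inord 0) t0, P (inord 1) t1, P (inord 2) t2, P (inord 3) t3,
      P (inord 4) t4, P (inord 5) t5 & P (inord 6) t6].
Proof.
apply/forallP/idP => [H|].
  move: (H (inord 0)) (H (inord 1)) (H (inord 2)) (H (inord 3)) (H (inord 4)) (H (inord 5))
    (H (inord 6)).
  by rewrite !ffun7E //= => -> -> -> -> -> -> ->.
case/and5P=> P0 P1 P2 P3 /and3P[P4 P5 P6].
by apply: ord7_ind; rewrite ffun7E.
Qed.

Lemma ffun7_eta (T : Type) (f : {ffun 'I_7 -> T}) :
  f = ffun7 (f (inord 0)) (f (inord 1)) (f (inord 2)) (f (inord 3)) (f (inord 4))
            (f (inord 5)) (f (inord 6)).
Proof. by apply/ffunP; apply: ord7_ind; rewrite ffun7E. Qed.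

Lemma inS_ffun7 b0 b1 b2 b3 b4 b5 b6 :
  inS (ffun7 b0 b1 b2 b3 b4 b5 b6) =
  [|| (b2 + b3 + b4 + b5 + b6 == 0)%N, (b1 + b3 + b4 + b5 + b6 == 0)%N,
      (b1 + b2 + b4 + b5 + b6 == 0)%N, (b0 + b2 + b5 + b3 + b6 == 0)%N,
      (b0 + b1 + b4 + b3 + b6 == 0)%N, (b0 + b1 + b4 + b2 + b5 == 0)%N
    | (b0 + b1 + b2 + b3 == 0)%N].
Proof.
rewrite /inS /minQuant /quantA /quantB /quantC /e0 /ee /ff.
rewrite !(@big_ord_recl nat _ minn) !(@big_ord0 nat _ minn).
do 6 (rewrite big_mkcond /= !big_ord_recl !big_ord0 /=).
rewrite !ffun7E //=.
by case: b0; case: b1; case: b2; case: b3; case: b4; case: b5; case: b6.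
Qed.

Lemma leB7_ffun7 c0 c1 c2 c3 c4 c5 c6 b0 b1 b2 b3 b4 b5 b6 :
  leB7 (ffun7 c0 c1 c2 c3 c4 c5 c6) (ffun7 b0 b1 b2 b3 b4 b5 b6) =
  [&& c0 ==> b0, c1 ==> b1, c2 ==> b2, c3 ==> b3, c4 ==> b4, c5 ==> b5 & c6 ==> b6].
Proof.
rewrite /leB7 (forall_ffun7 (fun i c => c ==> ffun7 b0 b1 b2 b3 b4 b5 b6 i)).
by rewrite !ffun7E.
Qed.

Lemma zeta_inj (T : finType) (V : zmodType) (le : rel T) :
  reflexive le -> antisymmetric le -> transitive le ->
  forall f g : T -> V,
  (forall n, \sum_(m | le m n) f m = \sum_(m | le m n) g m) -> f =1 g.
Proof.
move=> le_refl le_anti le_trans f g zeta_fg n.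
elim: {n}#|[pred m | le m n]| {-2}n (leqnn #|[pred m | le m n]|) => [|k IHk] n.
  by rewrite leqn0 => /eqP/card0_eq/(_ n); rewrite inE le_refl.
move=> card_n; have := zeta_fg n.
rewrite (bigD1 n) ?le_refl //= [in RHS](bigD1 n) ?le_refl //=.
suff -> : \sum_(m | le m n && (m != n)) f m = \sum_(m | le m n && (m != n)) g m.
  by move/addIr.
apply: eq_bigr => m /andP[le_mn ne_mn]; apply: IHk.
rewrite -ltnS (leq_trans _ card_n) // proper_card //; apply/properP; split.
  by apply/fintype.subsetP => x; rewrite !inE => /le_trans; apply.
exists n; rewrite !inE ?le_refl //.
by apply: contra ne_mn => le_nm; apply/eqP/le_anti; rewrite le_mn.
Qed.

Lemma leB7_refl : reflexive leB7.
Proof. by move=> n; apply/forallP => i; apply/implyP. Qed.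

Lemma leB7_anti : antisymmetric leB7.
Proof.
move=> m n /andP[/forallP le_mn /forallP le_nm]; apply/ffunP => i.
by apply/idP/idP; [apply/implyP/le_mn | apply/implyP/le_nm].
Qed.

Lemma leB7_trans : transitive leB7.
Proof.
move=> n m p /forallP le_mn /forallP le_np; apply/forallP => i.
by apply/implyP => /(implyP (le_mn i))/(implyP (le_np i)).
Qed.

(* The values of mu^0_S, found by Moebius inversion of the indicator of {0,1}^7_S;
   [is_mu0S_tab] checks them against the defining relation. *)
Definition mu0S_tab (b0 b1 b2 b3 b4 b5 b6 : bool) : int :=
  match b0, b1, b2, b3, b4, b5, b6 with
  | false, false, false, false, false, false, false => 1
  | false, false, false, true, false, true, false => -1
  | false, false, false, true, true, false, false => -1
  | false, false, false, true, true, true, false => 1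
  | false, false, true, false, false, false, true => -1
  | false, false, true, false, true, false, false => -1
  | false, false, true, false, true, false, true => 1
  | false, false, true, true, false, false, false => -1
  | false, false, true, true, false, false, true => 1
  | false, false, true, true, false, true, false => 1
  | false, false, true, true, true, false, false => 2
  | false, false, true, true, true, false, true => -1
  | false, false, true, true, true, true, false => -1
  | false, true, false, false, false, false, true => -1
  | false, true, false, false, false, true, false => -1
  | false, true, false, false, false, true, true => 1
  | false, true, false, true, false, false, false => -1
  | false, true, false, true, false, false, true => 1
  | false, true, false, true, false, true, false => 2
  | false, true, false, true, false, true, true => -1
  | false, true, false, true, true, false, false => 1
  | false, true, false, true, true, true, false => -1
  | false, true, true, false, false, false, false => -1
  | false, true, true, false, false, false, true => 2
  | false, true, true, false, false, true, false => 1
  | false, true, true, false, false, true, true => -1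
  | false, true, true, false, true, false, false => 1
  | false, true, true, false, true, false, true => -1
  | false, true, true, true, false, false, false => 2
  | false, true, true, true, false, false, true => -2
  | false, true, true, true, false, true, false => -2
  | false, true, true, true, false, true, true => 1
  | false, true, true, true, true, false, false => -2
  | false, true, true, true, true, false, true => 1
  | false, true, true, true, true, true, false => 1
  | true, false, false, false, false, false, true => -1
  | true, false, false, false, false, true, false => -1
  | true, false, false, false, false, true, true => 1
  | true, false, false, false, true, false, false => -1
  | true, false, false, false, true, false, true => 1
  | true, false, false, false, true, true, false => 1
  | true, false, false, false, true, true, true => -1
  | true, false, false, true, false, true, false => 1
  | true, false, false, true, true, false, false => 1
  | true, false, false, true, true, true, false => -1
  | true, false, true, false, false, false, true => 1
  | true, false, true, false, true, false, false => 1
  | true, false, true, false, true, false, true => -1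
  | true, false, true, true, false, true, true => -1
  | true, false, true, true, true, false, false => -1
  | true, false, true, true, true, true, true => 1
  | true, true, false, false, false, false, true => 1
  | true, true, false, false, false, true, false => 1
  | true, true, false, false, false, true, true => -1
  | true, true, false, true, false, true, false => -1
  | true, true, false, true, true, false, true => -1
  | true, true, false, true, true, true, true => 1
  | true, true, true, false, false, false, true => -1
  | true, true, true, false, true, true, false => -1
  | true, true, true, false, true, true, true => 1
  | true, true, true, true, false, true, true => 1
  | true, true, true, true, true, false, true => 1
  | true, true, true, true, true, true, false => 1
  | true, true, true, true, true, true, true => -2
  | _, _, _, _, _, _, _ => 0
  end%R.

Definition mu0S_val (n : B7) : int :=
  mu0S_tab (n (inord 0)) (n (inord 1)) (n (inord 2)) (n (inord 3)) (n (inord 4)) (n (inord 5))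
    (n (inord 6)).

Lemma is_mu0S_tab : is_mu0S mu0S_val.
Proof.
move=> n; rewrite [in LHS](ffun7_eta n) inS_ffun7 big_mkcond sum_ffun7 /=.
under eq_bigr do under eq_bigr do under eq_bigr do under eq_bigr do under eq_bigr do
  under eq_bigr do under eq_bigr do
    rewrite [in leB7 _ n](ffun7_eta n) leB7_ffun7 /mu0S_val !ffun7E //.
rewrite !big_bool.
move: (n (inord 0)) (n (inord 1)) (n (inord 2)) (n (inord 3)) (n (inord 4)) (n (inord 5))
  (n (inord 6)).
by do 7 case.
Qed.

Lemma mu0S_ffun7 (mu : B7 -> int) b0 b1 b2 b3 b4 b5 b6 : is_mu0S mu ->
  mu (ffun7 b0 b1 b2 b3 b4 b5 b6) = mu0S_tab b0 b1 b2 b3 b4 b5 b6.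
Proof.
move=> mu_def; have mu_tab : mu =1 mu0S_val.
  by apply: (zeta_inj leB7_refl leB7_anti leB7_trans) => n; rewrite -mu_def -is_mu0S_tab.
by rewrite mu_tab /mu0S_val !ffun7E.
Qed.

Lemma sum_ffun7_pairs (V : nmodType) (T : finType) (F : {ffun 'I_7 -> T} -> V) :
  \sum_(f : {ffun 'I_7 -> T}) F f =
  \sum_(t0 : T) \sum_(x1 : T) \sum_(y1 : T) \sum_(x2 : T) \sum_(y2 : T)
   \sum_(x3 : T) \sum_(y3 : T) F (ffun7 t0 x1 x2 x3 y1 y2 y3).
Proof.
rewrite sum_ffun7; apply: eq_bigr => t0 _; apply: eq_bigr => x1 _.
under eq_bigr do rewrite exchange_big /=.
rewrite exchange_big /=; apply: eq_bigr => y1 _; apply: eq_bigr => x2 _.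
by rewrite exchange_big.
Qed.

Definition nallowed (R : nzRingType) (q : R) (u : bool) : R := if u then 1 else q.

(* For a finite field of order q, the number of pairs (x, y) with x * y = c,
   x = 0 if u and y = 0 if v, is [pairs_unit q u v + pairs_jump q u v * (c == 0)]. *)
Definition pairs_unit (R : nzRingType) (q : R) (u v : bool) : R :=
  if ~~ u && ~~ v then q - 1 else 0.
Definition pairs_jump (R : nzRingType) (q : R) (u v : bool) : R := if u && v then 1 else q.

Definition quadric_count (R : nzRingType) (q : R) (b0 b1 b2 b3 b4 b5 b6 : bool) : R :=
  nallowed q b0 *
  ((pairs_unit q b3 b6 * (nallowed q b2 * nallowed q b5) + pairs_jump q b3 b6 * pairs_unit q b2 b5)
     * (nallowed q b1 * nallowed q b4)
   + pairs_jump q b3 b6 * pairs_jump q b2 b5 * (pairs_unit q b1 b4 + pairs_jump q b1 b4)).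

Section PointCount.
Variables (K : finFieldType) (R : comNzRingType).
Local Notation q := (#|K|%:R : R).

Definition allowed (u : bool) (x : K) : bool := u ==> (x == 0).

Definition pair_sum (u v : bool) (g : K -> R) (s : K) : R :=
  \sum_(x | allowed u x) \sum_(y | allowed v y) g (s + x * y).

Lemma sum_allowed (u : bool) (F : K -> R) :
  \sum_(x | allowed u x) F x = if u then F 0 else \sum_x F x.
Proof. by case: u; [apply: big_pred1_eq | apply: eq_bigl]. Qed.

Lemma sum_allowed_cst (u : bool) (c : R) : \sum_(x | allowed u x) c = nallowed q u * c.
Proof. by rewrite sum_allowed /nallowed; case: u; rewrite ?mul1r // sumr_const mulr_natl. Qed.

Lemma sum_affine_root (a s : K) : a != 0 -> \sum_(y : K) ((s + a * y == 0)%:R : R) = 1.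
Proof.
move=> a_neq0; rewrite (eq_bigr (fun y => if y == - s / a then 1 else 0)).
  by rewrite -big_mkcond big_pred1_eq.
move=> y _; have -> : (s + a * y == 0) = (y == - s / a).
  rewrite addrC addr_eq0; apply/eqP/eqP => [<-|->]; first by rewrite mulrC mulKf.
  by rewrite mulrC divfK.
by case: (_ == _).
Qed.

Lemma sum_nonzero_cst (c : R) : \sum_(x : K | x != 0) c = (q - 1) * c.
Proof.
apply: (@addrI _ c); rewrite -(bigD1 0 (P := xpredT)) //= sumr_const -mulr_natl; ring.
Qed.

Lemma sum_prod_root (s : K) :
  \sum_(x : K) \sum_(y : K) ((s + x * y == 0)%:R : R) = (q - 1) + q * (s == 0)%:R.
Proof.
rewrite (bigD1 0) //= addrC; congr (_ + _).
  by rewrite -[q - 1]mulr1 -sum_nonzero_cst; apply: eq_bigr => x; apply: sum_affine_root.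
by under eq_bigr do rewrite mul0r addr0; rewrite sumr_const mulr_natl.
Qed.

Lemma pair_sum_root (u v : bool) (s : K) :
  pair_sum u v (fun z => (z == 0)%:R) s = pairs_unit q u v + pairs_jump q u v * (s == 0)%:R.
Proof.
rewrite /pair_sum /pairs_unit /pairs_jump sum_allowed.
case: u; case: v => /=; rewrite ?sum_allowed ?add0r.
- by rewrite big_pred1_eq mul0r addr0 mul1r.
- by under eq_bigr do rewrite mul0r addr0; rewrite sumr_const mulr_natl.
- by under eq_bigr do rewrite big_pred1_eq mulr0 addr0; rewrite sumr_const mulr_natl.
- exact: sum_prod_root.
Qed.

Lemma pair_sum_affine (u v : bool) (g : K -> R) (c d : R) (s : K) :
  (forall z, g z = c + d * (z == 0)%:R) ->
  pair_sum u v g s =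
  c * (nallowed q u * nallowed q v) + d * (pairs_unit q u v + pairs_jump q u v * (s == 0)%:R).
Proof.
move=> gE; rewrite -pair_sum_root /pair_sum.
have -> : c * (nallowed q u * nallowed q v) = \sum_(x | allowed u x) \sum_(y | allowed v y) c.
  by under eq_bigr do rewrite sum_allowed_cst; rewrite sum_allowed_cst mulrC mulrA.
rewrite big_distrr -big_split /=; apply: eq_bigr => x _.
rewrite big_distrr -big_split /=; apply: eq_bigr => y _.
by rewrite gE.
Qed.

Lemma sum_filter_if (I : finType) (P : pred I) (b : bool) (F : I -> R) :
  (if b then \sum_(i | P i) F i else 0) = \sum_i (if b && P i then F i else 0).
Proof. by case: b => /=; [rewrite big_mkcond | rewrite big1]. Qed.


Lemma card_quadric_pair_sum b0 b1 b2 b3 b4 b5 b6 :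
  #|[set x : {ffun 'I_7 -> K} |
      [forall i, ffun7 b0 b1 b2 b3 b4 b5 b6 i ==> (x i == 0)] &&
      (x (inord 1) * x (inord 4) + x (inord 2) * x (inord 5)
        + x (inord 3) * x (inord 6) == 0)]|%:R =
  \sum_(x0 | allowed b0 x0)
    pair_sum b1 b4 (pair_sum b2 b5 (pair_sum b3 b6 (fun z => (z == 0)%:R))) 0.
Proof.
rewrite cardsE -sum1_card natr_sum big_mkcond sum_ffun7_pairs /pair_sum.
apply/esym; rewrite big_mkcond.
under eq_bigr do rewrite sum_filter_if.
under eq_bigr do under eq_bigr do rewrite sum_filter_if.
under eq_bigr do under eq_bigr do under eq_bigr do rewrite sum_filter_if.
under eq_bigr do under eq_bigr do under eq_bigr do under eq_bigr do rewrite sum_filter_if.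
under eq_bigr do under eq_bigr do under eq_bigr do under eq_bigr do under eq_bigr do
  rewrite sum_filter_if.
under eq_bigr do under eq_bigr do under eq_bigr do under eq_bigr do under eq_bigr do
  under eq_bigr do rewrite sum_filter_if.
apply: eq_bigr => x0 _; apply: eq_bigr => x1 _; apply: eq_bigr => y1 _.
apply: eq_bigr => x2 _; apply: eq_bigr => y2 _; apply: eq_bigr => x3 _; apply: eq_bigr => y3 _.
rewrite unfold_in (forall_ffun7 (fun i b => b ==> (ffun7 x0 x1 x2 x3 y1 y2 y3 i == 0))).
rewrite !ffun7E //= /allowed add0r.
by do 7 case: (_ ==> _) => //=; case: (_ == 0).
Qed.

Lemma card_quadric b0 b1 b2 b3 b4 b5 b6 :
  #|[set x : {ffun 'I_7 -> K} |
      [forall i, ffun7 b0 b1 b2 b3 b4 b5 b6 i ==> (x i == 0)] &&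
      (x (inord 1) * x (inord 4) + x (inord 2) * x (inord 5)
        + x (inord 3) * x (inord 6) == 0)]|%:R = quadric_count q b0 b1 b2 b3 b4 b5 b6.
Proof.
rewrite card_quadric_pair_sum.
have sum3 z : pair_sum b3 b6 (fun z => (z == 0)%:R) z =
    pairs_unit q b3 b6 + pairs_jump q b3 b6 * (z == 0)%:R.
  exact: pair_sum_root.
have sum23 z : pair_sum b2 b5 (pair_sum b3 b6 (fun z => (z == 0)%:R)) z =
    (pairs_unit q b3 b6 * (nallowed q b2 * nallowed q b5) + pairs_jump q b3 b6 * pairs_unit q b2 b5)
    + pairs_jump q b3 b6 * pairs_jump q b2 b5 * (z == 0)%:R.
  by rewrite (pair_sum_affine _ _ _ sum3); ring.
by rewrite (eq_bigr _ (fun _ _ => pair_sum_affine _ _ _ sum23)) sum_allowed_cst eqxx mulr1.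
Qed.

End PointCount.

Local Open Scope classical_set_scope.

Section NonnegativeSums.
Variable R : realType.
Local Open Scope ereal_scope.

Lemma nneseries_geometric (z : R) : (0 <= z < 1)%R ->
  \sum_(i <oo) (z ^+ i)%:E = ((1 - z)^-1)%:E.
Proof.
move=> /andP[z_ge0 z_lt1].
have := @cvg_geometric_series R 1 z; rewrite ger0_norm // div1r => /(_ z_lt1) geo_cvg.
have -> : \sum_(i <oo) (z ^+ i)%:E = limn (EFin \o series (geometric 1 z)).
  apply/congr_lim/funext => n /=; rewrite sumEFin /series /=; congr EFin.
  by apply: eq_bigr => i _; rewrite /geometric /= mul1r.
by rewrite EFin_lim ?(cvg_lim _ geo_cvg) //; apply/cvg_ex; exists (1 - z)^-1%R.
Qed.

Lemma esum_geometric_tail (C z : R) (N : nat) : (0 <= C)%R -> (0 <= z < 1)%R ->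
  \esum_(n in [set n | (N <= n)%N]) (C * z ^+ n)%:E = (C * (z ^+ N / (1 - z)))%:E.
Proof.
move=> C_ge0 /[dup] z01 /andP[z_ge0 _].
have zX_ge0 n : (0 <= z ^+ n)%R by rewrite exprn_ge0.
rewrite -nneseries_esum => [|n _]; last by rewrite lee_fin mulr_ge0.
rewrite -(@eseries_cond R _ xpredT N) -nneseries_addn => [|n]; last by rewrite lee_fin mulr_ge0.
rewrite (eq_eseriesr (g := fun n => (C * z ^+ N)%:E * (z ^+ n)%:E)) => [|n _]; last first.
  by rewrite -EFinM exprD mulrCA mulrC.
rewrite nneseriesZl => [|n _]; last by rewrite lee_fin.
by rewrite nneseries_geometric // -EFinM mulrA.
Qed.

Lemma esum_geometric_orthant (C z : R) (a b c : nat) : (0 <= C)%R -> (0 <= z < 1)%R ->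
  \esum_(n in [set n : nat * nat * nat | [/\ a <= n.1.1, b <= n.1.2 & c <= n.2]%N])
    (C * z ^+ (n.1.1 + n.1.2 + n.2))%:E =
  (C * (z ^+ a / (1 - z)) * (z ^+ b / (1 - z)) * (z ^+ c / (1 - z)))%:E.
Proof.
move=> C_ge0 /[dup] z01 /andP[z_ge0 z_lt1].
have zX_ge0 n : (0 <= z ^+ n)%R by rewrite exprn_ge0.
have tail_ge0 k : (0 <= z ^+ k / (1 - z))%R by rewrite divr_ge0 // subr_ge0 ltW.
have tail_shift (D : R) (s k0 : nat) : (0 <= D)%R ->
    \esum_(k in [set k | (k0 <= k)%N]) (D * z ^+ (s + k))%:E =
    (D * z ^+ s * (z ^+ k0 / (1 - z)))%:E.
  move=> D_ge0; under eq_esum do rewrite exprD mulrA.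
  by rewrite esum_geometric_tail ?mulr_ge0.
have -> : [set n : nat * nat * nat | [/\ a <= n.1.1, b <= n.1.2 & c <= n.2]%N] =
    ([set i | (a <= i)%N] `*`` fun=> [set j | (b <= j)%N]) `*`` fun=> [set k | (c <= k)%N].
  by apply/seteqP; split=> -[[i j] k] /=; [case | case=> -[]].
rewrite -(esum_esum (a := fun p k => (C * z ^+ (p.1 + p.2 + k))%:E)) => [|p k _ _]; last first.
  by rewrite lee_fin mulr_ge0.
rewrite (eq_esum (b := fun p => (C * z ^+ (p.1 + p.2) * (z ^+ c / (1 - z)))%:E)) => [|p _];
  last exact: tail_shift.
rewrite -(esum_esum (a := fun i j => (C * z ^+ (i + j) * (z ^+ c / (1 - z)))%:E)) => [|i j _ _];
  last by rewrite lee_fin (mulr_ge0 (mulr_ge0 C_ge0 (zX_ge0 _)) (tail_ge0 c)).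
rewrite (eq_esum (b := fun i => (C * (z ^+ c / (1 - z)) * (z ^+ b / (1 - z)) * z ^+ i)%:E)).
  by rewrite esum_geometric_tail ?(mulr_ge0 (mulr_ge0 C_ge0 (tail_ge0 c))) //; congr (_%:E); ring.
move=> i _; rewrite mulrAC; under eq_esum do rewrite mulrAC.
exact: tail_shift (mulr_ge0 _ _).
Qed.

Lemma esum_exchange (T1 T2 : choiceType) (P : T1 -> T2 -> Prop) (f : T1 -> T2 -> \bar R) :
  (forall i j, 0 <= f i j) ->
  \esum_(i in [set: T1]) \esum_(j in [set j | P i j]) f i j =
  \esum_(j in [set: T2]) \esum_(i in [set i | P i j]) f i j.
Proof.
move=> f_ge0; rewrite !esum_esum //.
rewrite (reindex_esum ([set: T2] `*`` (fun j => [set i | P i j]))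
   ([set: T1] `*`` (fun i => [set j | P i j])) (fun p => (p.2, p.1))) //=.
split.
- by move=> [j i] /= [_ h].
- by move=> [j1 i1] [j2 i2] _ _ /= [-> ->].
- by move=> [i j] /= [_ h]; exists (j, i).
Qed.

End NonnegativeSums.

Section LayerDecomposition.
Variables (R : realType) (q : R).
Hypothesis q_gt1 : 1 < q.
Local Notation r := (q^-1).

Let q_gt0 : 0 < q. Proof. exact: lt_trans q_gt1. Qed.
Let r_ge0 : 0 <= r. Proof. by rewrite invr_ge0 ltW. Qed.
Let r_lt1 : r < 1. Proof. by rewrite invf_lt1. Qed.
Let r01 : 0 <= r < 1. Proof. by rewrite r_ge0 r_lt1. Qed.
Let rX_ge0 n : 0 <= r ^+ n. Proof. exact: exprn_ge0. Qed.

Definition layer (k : nat) : R := if k is k'.+1 then q ^+ k'.+1 - q ^+ k' else 1.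

Lemma layer_ge0 k : 0 <= layer k.
Proof. by case: k => //= k; rewrite subr_ge0 exprS ler_peMl ?exprn_ge0 ?ltW. Qed.

Lemma sum_layer m : \sum_(k < m.+1) layer k = q ^+ m.
Proof.
elim: m => [|m IHm]; first by rewrite big_ord1 expr0.
by rewrite big_ord_recr /= IHm addrC subrK.
Qed.

(* The sum of r ^ n over n + x >= k, the subtraction k - x being truncated. *)
Definition tail (k x : nat) : R := r ^+ (k - x) / (1 - r).

Lemma tail_ge0 k x : 0 <= tail k x.
Proof. by rewrite divr_ge0 // subr_ge0 ltW. Qed.

Lemma layer_tails_ge0 k x y z : 0 <= layer k * tail k x * tail k y * tail k z.
Proof.
exact: mulr_ge0 (mulr_ge0 (mulr_ge0 (layer_ge0 k) (tail_ge0 k x)) (tail_ge0 k y)) (tail_ge0 k z).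
Qed.

Definition Fcore (x y z : nat) : R :=
  1 + (q - 1) * r ^+ ((1 - x) + (1 - y) + (1 - z))
    + (q - 1) * q * r ^+ ((2 - x) + (2 - y) + (2 - z)) / (1 - r ^+ 2).

Local Open Scope ereal_scope.

Lemma exprq_div_esum_layer (m N : nat) :
  ((q ^+ m / q ^+ N)%:E : \bar R) = \esum_(k in [set k | (k <= m)%N]) (layer k * r ^+ N)%:E.
Proof.
have summand_ge0 k : 0 <= (layer k * r ^+ N)%:E by rewrite lee_fin mulr_ge0 ?layer_ge0.
rewrite -nneseries_esum // (nneseries_split_cond 0 m.+1) // add0n.
rewrite eseries0 ?adde0 => [|i le_m1_i le_i_m]; last first.
  by move: (leq_trans le_m1_i le_i_m); rewrite ltnn.
rewrite sumEFin big_mkord (eq_bigl xpredT) => [|i]; last by rewrite -ltnS ltn_ord.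
by rewrite -big_distrl /= sum_layer exprVn.
Qed.

Lemma esum_F_layers (x y z : nat) :
  \esum_(n in [set: nat * nat * nat])
     ((q ^+ minn (n.1.1 + x) (minn (n.1.2 + y) (n.2 + z))) / q ^+ (n.1.1 + n.1.2 + n.2))%:E
  = \esum_(k in [set: nat]) (layer k * tail k x * tail k y * tail k z)%:E.
Proof.
under eq_esum do rewrite exprq_div_esum_layer.
rewrite (esum_exchange
    (fun n k => (k <= minn (n.1.1 + x) (minn (n.1.2 + y) (n.2 + z)))%N)
    (f := fun n k => (layer k * r ^+ (n.1.1 + n.1.2 + n.2))%:E)) => [|n k]; last first.
  by rewrite lee_fin mulr_ge0 ?layer_ge0.
apply: eq_esum => k _.
have -> : [set n : nat * nat * nat | (k <= minn (n.1.1 + x) (minn (n.1.2 + y) (n.2 + z)))%N] =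
    [set n | [/\ k - x <= n.1.1, k - y <= n.1.2 & k - z <= n.2]%N].
  by apply/seteqP; split=> -[[a b] c] /=;
    rewrite !leq_subLR (addnC x) (addnC y) (addnC z) !leq_min => /and3P.
by rewrite esum_geometric_orthant ?layer_ge0.
Qed.

Lemma esum_layers_tails (x y z : nat) : (x <= 2)%N -> (y <= 2)%N -> (z <= 2)%N ->
  \esum_(k in [set: nat]) (layer k * tail k x * tail k y * tail k z)%:E =
  ((1 - r)^-1 ^+ 3 * Fcore x y z)%:E.
Proof.
move=> le_x2 le_y2 le_z2.
have summand_ge0 k : 0 <= (layer k * tail k x * tail k y * tail k z)%:E.
  by rewrite lee_fin layer_tails_ge0.
rewrite -nneseries_esumT // (nneseries_split 0 2) // add0n -nneseries_addn //.
rewrite (eq_eseriesr (g := fun i => ((q - 1) * q * r ^+ ((2 - x) + (2 - y) + (2 - z))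
    * (1 - r)^-1 ^+ 3)%R%:E * ((r ^+ 2) ^+ i)%:E)) => [|i _]; last first.
  rewrite -EFinM; congr (_%:E).
  rewrite /tail /= -!addnBA // !exprD.
  have qr_i : (q ^+ i * r ^+ i = 1)%R by rewrite -exprMn mulfV ?gt_eqF // expr1n.
  transitivity (q ^+ i * r ^+ i * ((q - 1) * q * r ^+ (2 - x) * r ^+ (2 - y) * r ^+ (2 - z)
      * (1 - r)^-1 ^+ 3 * (r ^+ i * r ^+ i)))%R.
    by rewrite addn2 /= !exprS; ring.
  by rewrite qr_i mul1r -exprM mulnC exprM; ring.
rewrite nneseriesZl => [|i _]; last by rewrite lee_fin !exprn_ge0.
rewrite nneseries_geometric ?exprn_ge0 ?expr_lt1 //.
rewrite big_ltn // big_ltn // big_geq // adde0 -!EFinM -!EFinD; congr (_%:E).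
by rewrite /tail /Fcore /= !sub0n !expr0 expr1 !exprD; ring.
Qed.

Local Close Scope ereal_scope.

Lemma F_atE (x y z : nat) : (x <= 2)%N -> (y <= 2)%N -> (z <= 2)%N ->
  F_at q (x, y, z) = (1 - r)^-1 ^+ 3 * Fcore x y z.
Proof. by move=> le_x2 le_y2 le_z2; rewrite /F_at /= esum_F_layers esum_layers_tails. Qed.

Lemma Ftilde_atE (x y z : nat) : (x <= 2)%N -> (y <= 2)%N -> (z <= 2)%N ->
  Ftilde_at q (x, y, z) = (1 - r ^+ 2) * Fcore x y z.
Proof.
move=> le_x2 le_y2 le_z2; rewrite /Ftilde_at F_atE //.
have r1_neq0 : 1 - r != 0 by rewrite subr_eq0 eq_sym lt_eqF.
have -> : q * r * r * r = r ^+ 2 by rewrite mulfV ?gt_eqF // mul1r expr2.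
rewrite -!mulrA; congr (_ * _); rewrite !mulrA.
by move: r1_neq0; move: (1 - r) => s s_neq0; field.
Qed.

End LayerDecomposition.

Lemma dens_S_ffun7 (R : realType) (K : finFieldType) b0 b1 b2 b3 b4 b5 b6 :
  dens_S R K (ffun7 b0 b1 b2 b3 b4 b5 b6) =
  (#|K|%:R ^+ 6)^-1 * quadric_count (#|K|%:R : R) b0 b1 b2 b3 b4 b5 b6.
Proof. by rewrite /dens_S card_quadric. Qed.

Lemma fact_v_ffun7 (R : realType) (q : R) b0 b1 b2 b3 b4 b5 b6 : 1 < q ->
  fact_v q (ffun7 b0 b1 b2 b3 b4 b5 b6) =
  (q ^+ (b0 + (b1 + b4) + (b2 + b5) + (b3 + b6)))^-1 * Fcore q (b1 + b4) (b2 + b5) (b3 + b6).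
Proof.
move=> q_gt1; have le_bits2 (u v : bool) : (u + v <= 2)%N by case: u v => [] [].
rewrite /fact_v /e0 /ee /ff !big_ord_recl big_ord0 /= !inordK // !ffun7E //=.
rewrite !addnA addn0 Ftilde_atE ?le_bits2 //.
have q_gt0 : 0 < q := lt_trans ltr01 q_gt1.
have q2_neq1 : 1 - q ^- 2 != 0.
  by rewrite subr_eq0 eq_sym lt_eqF // invf_lt1 ?exprn_gt0 // exprn_egt1.
by rewrite exprVn [_ / _]mulrC -mulrA mulKf.
Qed.

Theorem mainTheorem13 (R : realType) (K : finFieldType) (mu : B7 -> int) :
  is_mu0S mu ->
  \sum_(n : B7) (mu n)%:~R * fact_v (#|K|%:R : R) n
  = \sum_(n : B7) (mu n)%:~R * dens_S R K n.
Proof.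
move=> mu_def.
have q_gt1 : 1 < (#|K|%:R : R).
  by rewrite ltr1n; apply/card_gt1P; exists 0, 1; rewrite eq_sym oner_neq0.
rewrite !sum_ffun7 !big_bool !(mu0S_ffun7 _ _ _ _ _ _ _ mu_def).
rewrite !(fact_v_ffun7 _ _ _ _ _ _ _ q_gt1) !dens_S_ffun7.
rewrite /mu0S_tab /Fcore /quadric_count /nallowed /pairs_unit /pairs_jump /=.
field.
by rewrite gt_eqF ?(lt_trans ltr01) //= subr_eq0 gt_eqF // exprn_egt1.
Qed.
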